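(* Let $p$ be an odd prime and $n$ a positive integer with $p^n>3$, let $d=\frac{p^n-3}{2}$ and $F(x)=x^d$ on $\mathrm{GF}(p^n)$. For $c=-1$, ${}_c\Delta_F\le4$.
   Context: For a function $F:\mathrm{GF}(p^n)\to\mathrm{GF}(p^n)$ and $a,b,c\in\mathrm{GF}(p^n)$, let ${}_c\Delta_F(a,b)=\#\{x\in\mathrm{GF}(p^n): F(x+a)-cF(x)=b\}$. The $c$-differential uniformity of $F$ is ${}_c\Delta_F=\max\{{}_c\Delta_F(a,b): a,b\in\mathrm{GF}(p^n),\ \text{and } a\neq 0 \text{ if } c=1\}$. *)

From HB Require Import structures.
From mathcomp Require Import all_boot all_order all_algebra all_field.
Set Implicit Arguments. Unset Strict Implicit. Unset Printing Implicit Defensive.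
Import GRing.Theory.
Local Open Scope ring_scope.

Definition cDelta (K : finFieldType) (F : K -> K) (c a b : K) : nat :=
  #|[set x : K | F (x + a) - c * F x == b]|.

Definition cDiffUnif (K : finFieldType) (F : K -> K) (c : K) : nat :=
  \max_(ab : K * K | (c != 1) || (ab.1 != 0)) cDelta F c ab.1 ab.2.

From HB Require Import structures.
From mathcomp Require Import all_boot all_order all_algebra all_field.
From mathcomp Require Import ring zify.
Set Implicit Arguments. Unset Strict Implicit. Unset Printing Implicit Defensive.
Import GRing.Theory.
Local Open Scope ring_scope.

(* Let chi x := x ^+ d.+1 be the quadratic character of K, #|K| = 2 d + 3. For
   a != 0 the substitution x = a y turns (x + a)^d + x^d = b into
   (y + 1)^d + y^d = b / a^d. Away from y = 0, -1 we have y^d = chi y / y, so a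
   solution with chi y = e and chi (y + 1) = h is a root of the quadratic
   b y^2 + (b - e - h) y - e; each of the four sign patterns (e, h) thus gives
   at most two solutions. By Vieta, two solutions with the same pattern force
   chi b = chi (- e) = chi h, one solution with h = - e forces chi b = - chi e,
   and y |-> - (y + 1) matches the patterns (1, 1) and (-1, -1). A case analysis
   on chi (-1) and chi b then leaves at most 4 solutions. For a = 0 the equation
   is x^d = b / 2, and x = chi x * (b / 2)^-1 takes at most two values. *)

Lemma quadratic_vieta (R : idomainType) (a b c y1 y2 : R) : y1 != y2 ->
    a * y1 ^+ 2 + b * y1 + c = 0 -> a * y2 ^+ 2 + b * y2 + c = 0 ->
  a * (y1 + y2) = - b /\ a * (y1 * y2) = c.
Proof.
move=> y12 r1 r2.
have sum0 : a * (y1 + y2) + b = 0.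
  have : (y1 - y2) * (a * (y1 + y2) + b) = 0.
    by rewrite -[RHS](subrr 0) -{1}r1 -r2; ring.
  by move/eqP; rewrite mulf_eq0 subr_eq0 (negbTE y12) => /eqP.
split; first by apply/eqP; rewrite -subr_eq0 opprK sum0.
apply/eqP; rewrite -subr_eq0.
have -> : a * (y1 * y2) - c = y1 * (a * (y1 + y2) + b) - (a * y1 ^+ 2 + b * y1 + c) by ring.
by rewrite sum0 r1 mulr0 subrr.
Qed.

Lemma card_quadratic_roots (K : finFieldType) (a b c : K) (A : {set K}) : c != 0 ->
  {in A, forall y, a * y ^+ 2 + b * y + c = 0} -> (#|A| <= 2)%N.
Proof.
move=> c0 rootA; pose P : {poly K} := Poly [:: c; b; a].
have P0 : P != 0.
  by apply: contra_neq c0 => /(congr1 (fun q : {poly K} => q`_0)); rewrite coef_Poly coef0.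
have rootsP : all (root P) (enum A).
  apply/allP => y; rewrite mem_enum => /rootA ry.
  by rewrite /root /P horner_Poly /=; apply/eqP; rewrite -[RHS]ry; ring.
rewrite cardE -ltnS; apply: leq_trans (max_poly_roots P0 rootsP (enum_uniq _)) _.
exact: size_Poly.
Qed.

Section PowerMap.
Variables (K : finFieldType) (d : nat).
Hypotheses (d_gt0 : (0 < d)%N) (card_K : #|K| = (2 * d + 3)%N) (two_neq0 : (2 : K) != 0).

Definition chi (x : K) := x ^+ d.+1.

Lemma chi1 : chi 1 = 1. Proof. exact: expr1n. Qed.

Lemma chiM (x y : K) : chi (x * y) = chi x * chi y. Proof. exact: exprMn. Qed.

Lemma chi_sqr (x : K) : x != 0 -> chi x ^+ 2 = 1.
Proof.
move=> x0; apply: (mulIf x0); rewrite mul1r -exprM -exprSr.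
by rewrite (_ : _.+1 = #|K|) ?expf_card // card_K; lia.
Qed.

Lemma chi_sign (x : K) : x != 0 -> (chi x == 1) || (chi x == -1).
Proof. by move/chi_sqr/eqP; rewrite sqrf_eq1. Qed.

Lemma oner_eqN1 : (1 == -1 :> K) = false.
Proof.
by apply/negbTE; apply: contra_neq two_neq0 => /(congr1 (+%R 1)); rewrite addrN => <-.
Qed.

Lemma N1_eq1 : (-1 == 1 :> K) = false. Proof. by rewrite eq_sym oner_eqN1. Qed.

Definition shiftsum (y : K) := (y + 1) ^+ d + y ^+ d.

Lemma shiftsum0 : shiftsum 0 = 1.
Proof. by rewrite /shiftsum add0r expr1n expr0n gtn_eqF // addr0. Qed.

Lemma shiftsumN1 : shiftsum (-1) = - chi (-1).
Proof. by rewrite /shiftsum addNr expr0n gtn_eqF // add0r /chi exprSr mulrN1 opprK. Qed.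

Lemma shiftsum_scale (a x : K) : a != 0 -> (x + a) ^+ d + x ^+ d = a ^+ d * shiftsum (x / a).
Proof.
move=> a0; rewrite /shiftsum -[1](divff a0) -mulrDl !expr_div_n.
by rewrite mulrDr ![a ^+ d * _]mulrC !divfK ?expf_neq0.
Qed.

Definition fibre (b : K) := [set y | shiftsum y == b].

Definition branch (b e h : K) := [set y in fibre b | (chi y == e) && (chi (y + 1) == h)].
Arguments branch (b e h)%_R.

Lemma branch_eq (b e h y : K) : y \in branch b e h -> b * (y * (y + 1)) = h * y + e * (y + 1).
Proof.
rewrite !inE => /and3P[/eqP <- /eqP <- /eqP <-].
by rewrite /shiftsum /chi !exprSr; ring.
Qed.

Lemma branch_quadratic (b e h y : K) :
  y \in branch b e h -> b * y ^+ 2 + (b - e - h) * y - e = 0.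
Proof.
move=> /branch_eq yb.
have -> : b * y ^+ 2 + (b - e - h) * y - e = b * (y * (y + 1)) - (h * y + e * (y + 1)) by ring.
by rewrite yb subrr.
Qed.

Lemma card_branch (b e h : K) : e != 0 -> (#|branch b e h| <= 2)%N.
Proof.
by move=> e0; apply: card_quadratic_roots (@branch_quadratic b e h); rewrite oppr_eq0.
Qed.

Lemma card_branch_le1 (b e h : K) : e ^+ 2 = 1 -> h ^+ 2 = 1 ->
  ~ (chi b = chi (- e) /\ chi b = chi h) -> (#|branch b e h| <= 1)%N.
Proof.
move=> e2 h2 chi_b; rewrite leqNgt; apply/negP => /card_gt1P[y1 [y2 [y1b y2b y12]]].
have [sum prod] := quadratic_vieta y12 (branch_quadratic y1b) (branch_quadratic y2b).
have prod1 : b * ((y1 + 1) * (y2 + 1)) = h.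
  rewrite (_ : _ * _ = b * (y1 * y2) + b * (y1 + y2) + b); last by ring.
  by rewrite sum prod; ring.
move: y1b y2b; rewrite !inE.
move=> /and3P[_ /eqP chiy1 /eqP chiy1S] /and3P[_ /eqP chiy2 /eqP chiy2S].
apply: chi_b; split; [rewrite -prod | rewrite -prod1]; rewrite !chiM.
- by rewrite chiy1 chiy2 -expr2 e2 mulr1.
- by rewrite chiy1S chiy2S -expr2 h2 mulr1.
Qed.

Lemma card_branch_eq0 (b e h : K) : e ^+ 2 = 1 -> e + h = 0 ->
  chi b != - chi e -> #|branch b e h| = 0%N.
Proof.
move=> e2 /eqP; rewrite addrC addr_eq0 => /eqP-> chi_b; apply/eqP; rewrite cards_eq0.
apply: contraNT chi_b => /set0Pn[y yb]; have := branch_eq yb.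
rewrite (_ : - e * y + e * (y + 1) = e); last by ring.
move: yb; rewrite !inE => /and3P[_ /eqP chiy /eqP chiyS] /(congr1 chi).
by rewrite !chiM chiy chiyS mulrN -expr2 e2 mulrN1 => <-; rewrite opprK.
Qed.

(* y^2 + y + 1 = 0 makes y a cube root of unity, so y = (y^2)^2 is a square. *)
Lemma branch1_N1_1 : branch 1 (-1) 1 = set0.
Proof.
apply/setP => y; rewrite in_set0; apply/negP => yb.
have cube : y * (y + 1) = -1 by rewrite -[LHS]mul1r (branch_eq yb); ring.
move: yb; rewrite !inE => /and3P[_ /eqP chiy _].
have y0 : y != 0.
  by apply: contra_eq_neq chiy => ->; rewrite /chi expr0n eq_sym oppr_eq0 oner_eq0.
have sq : y = (y ^+ 2) ^+ 2.
  apply/eqP; rewrite -subr_eq0.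
  have -> : y - (y ^+ 2) ^+ 2 = - y * (y - 1) * (y * (y + 1) + 1) by ring.
  by rewrite cube addNr mulr0.
by move: oner_eqN1; rewrite -chiy sq [_ ^+ 2]expr2 chiM -expr2 chi_sqr ?expf_neq0 ?eqxx.
Qed.

(* y |-> - (y + 1) sends (-1, -1)-solutions to roots of the (1, 1)-quadratic with
   chi = chi (-1) * (-1) = -1, which are therefore not (1, 1)-solutions. *)
Lemma card_branch_same_sign (b : K) : chi (-1) = 1 ->
  (#|branch b 1 1| + #|branch b (-1) (-1)| <= 2)%N.
Proof.
move=> chiN1; pose r (y : K) := - (y + 1).
have r_inj : injective r by apply: (can_inj (g := r)) => y; rewrite /r; ring.
rewrite -(card_imset (branch b (-1) (-1)) r_inj) -cardsUI.
have -> : branch b 1 1 :&: r @: branch b (-1) (-1) = set0.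
  apply/setP => z; rewrite in_set0 in_setI; apply/negP => /andP[zb /imsetP[y yb zE]].
  move: yb zb; rewrite zE !inE => /and3P[_ _ /eqP chiyS] /and3P[_ /eqP].
  by rewrite /r -mulN1r chiM chiN1 chiyS mul1r => /esym/eqP; rewrite oner_eqN1.
rewrite cards0 addn0; apply: (card_quadratic_roots (a := b) (b := b - 1 - 1) (c := -1)).
  by rewrite oppr_eq0 oner_eq0.
move=> z; rewrite inE => /orP[/branch_quadratic // | /imsetP[y yb ->]].
by rewrite -[RHS](branch_quadratic yb) /r; ring.
Qed.

Lemma card_fibre_special (b : K) :
  (#|[set y in fibre b | y * (y + 1) == 0]%R| <= (b == 1)%R + (b == - chi (-1))%R)%N.
Proof.
pose E0 := if b == 1 then [set 0 : K] else set0.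
pose E1 := if b == - chi (-1) then [set -1 : K] else set0.
apply: (@leq_trans #|E0 :|: E1|).
  apply/subset_leq_card/subsetP => y; rewrite /E0 /E1 !inE mulf_eq0 addr_eq0.
  case/andP=> /eqP <- /orP[] /eqP ->; rewrite ?shiftsum0 ?shiftsumN1 eqxx /=.
    by rewrite !inE eqxx.
  by case: ifP; rewrite !inE ?eqxx ?orbT.
apply: leq_trans (leq_card_setU _ _) _.
by rewrite /E0 /E1; case: (b == 1); case: (b == _); rewrite ?cards1 ?cards0.
Qed.

Lemma card_fibre_split (b : K) : (#|fibre b| <= #|[set y in fibre b | y * (y + 1) == 0]%R|
  + (#|branch b 1 1| + #|branch b (-1) (-1)|) + #|branch b (-1) 1| + #|branch b 1 (-1)|)%N.
Proof.
pose E := [set y in fibre b | y * (y + 1) == 0].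
apply: (@leq_trans
  #|E :|: (branch b 1 1 :|: branch b (-1) (-1)) :|: branch b (-1) 1 :|: branch b 1 (-1)|).
  apply/subset_leq_card/subsetP => y; rewrite !inE => yb; rewrite yb /=.
  have [//|] := eqVneq (y * (y + 1)) 0; rewrite mulf_eq0 negb_or => /andP[y0 yS0].
  by case/orP: (chi_sign y0) => /eqP->; case/orP: (chi_sign yS0) => /eqP->;
    rewrite !eqxx ?oner_eqN1 ?N1_eq1 /= ?orbT.
do 2 (apply: leq_trans (leq_card_setU _ _) _; rewrite leq_add2r).
by apply: leq_trans (leq_card_setU _ _) _; rewrite leq_add2l leq_card_setU.
Qed.

Lemma card_fibre_le4_chiN1_1 (b : K) : chi (-1) = 1 -> (#|fibre b| <= 4)%N.
Proof.
move=> chiN1; apply: leq_trans (card_fibre_split b) _.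
set E := #|_|; set A := #|branch b 1 1|; set B := #|branch b (-1) (-1)|.
set C := #|branch b (-1) 1|; set D := #|branch b 1 (-1)|.
have nE : (E <= (b == 1)%R + (b == -1)%R)%N by have := card_fibre_special b; rewrite chiN1.
have nAB : (A + B <= 2)%N := card_branch_same_sign b chiN1.
have [bN1|bN1] := eqVneq (chi b) (-1).
- have nC : (C <= 1)%N.
    apply: card_branch_le1; rewrite ?sqrrN ?expr1n //.
    by rewrite opprK chi1 bN1 => -[/eqP]; rewrite N1_eq1.
  have nD : (D <= 1)%N.
    apply: card_branch_le1; rewrite ?sqrrN ?expr1n //.
    by rewrite chiN1 bN1 => -[/eqP]; rewrite N1_eq1.
  have b1 : b != 1 by apply: contra_eq_neq bN1 => ->; rewrite chi1 oner_eqN1.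
  have bN1' : b != -1 by apply: contra_eq_neq bN1 => ->; rewrite chiN1 oner_eqN1.
  by move: nE; rewrite (negbTE b1) (negbTE bN1'); lia.
- have C0 : C = 0%N by apply: card_branch_eq0; rewrite ?sqrrN ?expr1n ?addNr // chiN1.
  have D0 : D = 0%N by apply: card_branch_eq0; rewrite ?expr1n ?addrN // chi1.
  have nE1 : ((b == 1)%R + (b == -1)%R <= 1)%N.
    by have [->|_] := eqVneq b 1; rewrite ?oner_eqN1 ?leq_b1.
  lia.
Qed.

Lemma card_fibre_le4_chiN1_N1 (b : K) : chi (-1) = -1 -> (#|fibre b| <= 4)%N.
Proof.
move=> chiN1; apply: leq_trans (card_fibre_split b) _.
set E := #|_|; set A := #|branch b 1 1|; set B := #|branch b (-1) (-1)|.
set C := #|branch b (-1) 1|; set D := #|branch b 1 (-1)|.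
have nE : (E <= (b == 1)%R + (b == 1)%R)%N.
  by have := card_fibre_special b; rewrite chiN1 opprK.
have nA : (A <= 1)%N.
  apply: card_branch_le1; rewrite ?expr1n // => -[->].
  by rewrite chiN1 chi1 => /eqP; rewrite N1_eq1.
have nB : (B <= 1)%N.
  apply: card_branch_le1; rewrite ?sqrrN ?expr1n // => -[->].
  by rewrite opprK chiN1 chi1 => /eqP; rewrite oner_eqN1.
have nC : (C <= 2)%N by apply: card_branch; rewrite oppr_eq0 oner_eq0.
have nD : (D <= 2)%N by apply: card_branch; rewrite oner_eq0.
have [bN1|bN1] := eqVneq (chi b) (-1).
- have C0 : C = 0%N.
    by apply: card_branch_eq0; rewrite ?sqrrN ?expr1n ?addNr // chiN1 opprK bN1 N1_eq1.
  have b1 : b != 1 by apply: contra_eq_neq bN1 => ->; rewrite chi1 oner_eqN1.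
  by move: nE; rewrite (negbTE b1); lia.
- have D0 : D = 0%N by apply: card_branch_eq0; rewrite ?expr1n ?addrN // chi1.
  have [b1|b1] := eqVneq b 1.
  + have C0 : C = 0%N by rewrite /C b1 branch1_N1_1 cards0.
    lia.
  + by move: nE; rewrite (negbTE b1); lia.
Qed.

Lemma card_fibre_le4 (b : K) : (#|fibre b| <= 4)%N.
Proof.
have N1_neq0 : (-1 : K) != 0 by rewrite oppr_eq0 oner_eq0.
case/orP: (chi_sign N1_neq0) => /eqP chiN1.
- exact: card_fibre_le4_chiN1_1.
- exact: card_fibre_le4_chiN1_N1.
Qed.

Lemma card_pow_fibre (c : K) : (#|[set x : K | x ^+ d == c]| <= 2)%N.
Proof.
apply: (@leq_trans #|[set c^-1; - c^-1]|); last by rewrite cards2 ltnS leq_b1.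
apply/subset_leq_card/subsetP => x; rewrite !inE => /eqP xc.
have [x0|x0] := eqVneq x 0.
  by move: xc; rewrite x0 expr0n gtn_eqF // => <-; rewrite invr0 eqxx.
have c0 : c != 0 by rewrite -xc expf_neq0.
have chi_x : chi x = c * x by rewrite /chi exprSr xc.
rewrite -(mulKf c0 x) -chi_x.
by case/orP: (chi_sign x0) => /eqP->; rewrite ?mulr1 ?mulrN1 eqxx ?orbT.
Qed.

Lemma cDelta_pow_N1 (a b : K) : (cDelta (fun x : K => x ^+ d) (-1)%R a b <= 4)%N.
Proof.
rewrite /cDelta; have [->|a0] := eqVneq a 0.
  apply: (@leq_trans #|[set x : K | x ^+ d == b / 2]|).
    apply/subset_leq_card/subsetP => x; rewrite !inE addr0 mulN1r opprK => /eqP <-.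
    by rewrite -mulr2n -[_ *+ 2]mulr_natr mulfK.
  exact: leq_trans (card_pow_fibre _) _.
apply: leq_trans (card_fibre_le4 (b / a ^+ d)).
apply: leq_trans (leq_imset_card (fun y => a * y) (fibre (b / a ^+ d))).
apply/subset_leq_card/subsetP => x; rewrite inE mulN1r opprK (shiftsum_scale _ a0) => /eqP xb.
apply/imsetP; exists (x / a); last by rewrite mulrC divfK.
by rewrite inE -xb [a ^+ d * _]mulrC mulfK ?expf_neq0.
Qed.

End PowerMap.

Theorem theorem8 (p n : nat) (K : finFieldType)
  (hp : prime p) (hodd : odd p) (hn : (0 < n)%N)
  (hchar : p \in [pchar K]) (hcard : #|K| = (p ^ n)%N)
  (hgt : (3 < p ^ n)%N) :
  (cDiffUnif (fun x : K => x ^+ ((p ^ n - 3) %/ 2)) (-1 : K)%R <= 4)%N.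
Proof.
have q_mod2 : (p ^ n %% 2 = 1)%N by rewrite modn2 oddX hodd orbT.
have d_gt0 : (0 < (p ^ n - 3) %/ 2)%N by lia.
have card_K : #|K| = (2 * ((p ^ n - 3) %/ 2) + 3)%N by rewrite hcard; lia.
have two_neq0 : (2 : K) != 0.
  rewrite -(dvdn_pcharf hchar) (dvdn_prime2 hp) //.
  by apply: contraTneq hodd => ->.
apply/bigmax_leqP => -[a b] _.
exact: cDelta_pow_N1.
Qed.
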